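(* Let $G\ge 2$ and $p_t\in(0,1)$. Let $r_{t,1},\dots,r_{t,G}$ be i.i.d. $\mathrm{Bernoulli}(p_t)$, $R=\sum_j r_{t,j}$, $\hat p_t=R/G$, $\hat A_{t,i}=r_{t,i}-\hat p_t$, $A_{t,i}=r_{t,i}-p_t$, $\mathcal S=\{1\le R\le G-1\}$, and fix $i\in[G]$. (a) If $p_t<1/2$, then for every $\epsilon\in\bigl(0,\ \mathbb E[\hat p_t\mid\mathcal S]-p_t\bigr)$, \[ \mathbb P\!\left(A_{t,i}-\hat A_{t,i}>\epsilon\mid\mathcal S\right)=\frac{\sum_{k=\lfloor G(p_t+\epsilon)\rfloor+1}^{G-1}\binom{G}{k}p_t^k(1-p_t)^{G-k}}{1-(1-p_t)^G-p_t^G}. \] (b) If $p_t>1/2$, then for every $\epsilon\in\bigl(0,\ p_t-\mathbb E[\hat p_t\mid\mathcal S]\bigr)$, \[ \mathbb P\!\left(\hat A_{t,i}-A_{t,i}>\epsilon\mid\mathcal S\right)=\frac{\sum_{k=1}^{\lceil G(p_t-\epsilon)\rceil-1}\binom{G}{k}p_t^k(1-p_t)^{G-k}}{1-(1-p_t)^G-p_t^G}. \]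
   Context: Binary-reward group setting: $G$ i.i.d. Bernoulli$(p_t)$ rewards for one prompt, group baseline $\hat p_t$, group-relative advantage $\hat A_{t,i}$, expected advantage $A_{t,i}$, and non-degenerate event $\mathcal S$. A prompt with $p_t<1/2$ is called hard and one with $p_t>1/2$ easy. *)

From HB Require Import structures.
From mathcomp Require Import all_boot all_order all_algebra.
From mathcomp Require Import reals.
Set Implicit Arguments. Unset Strict Implicit. Unset Printing Implicit Defensive.
Import Order.TTheory GRing.Theory Num.Theory.
Local Open Scope ring_scope.

Definition outcome (G : nat) := {ffun 'I_G -> bool}.

Definition weight (R : realType) (G : nat) (p : R) (w : outcome G) : R :=
  \prod_(j < G) (if w j then p else 1 - p).

Definition Pr (R : realType) (G : nat) (p : R) (E : pred (outcome G)) : R :=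
  \sum_(w : outcome G | E w) weight p w.

Definition condPr (R : realType) (G : nat) (p : R) (E S : pred (outcome G)) : R :=
  Pr p [pred w | E w && S w] / Pr p S.

Definition condE (R : realType) (G : nat) (p : R) (X : outcome G -> R)
  (S : pred (outcome G)) : R :=
  (\sum_(w : outcome G | S w) weight p w * X w) / Pr p S.

Definition Rsum (G : nat) (w : outcome G) : nat := \sum_(j < G) nat_of_bool (w j).

Definition phat (R : realType) (G : nat) (w : outcome G) : R := (Rsum w)%:R / G%:R.

Definition Ahat (R : realType) (G : nat) (i : 'I_G) (w : outcome G) : R :=
  (nat_of_bool (w i))%:R - phat R w.

Definition Aexp (R : realType) (G : nat) (p : R) (i : 'I_G) (w : outcome G) : R :=
  (nat_of_bool (w i))%:R - p.

Definition nondeg (G : nat) : pred (outcome G) :=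
  [pred w | (1 <= Rsum w)%N && (Rsum w <= G - 1)%N].

From HB Require Import structures.
From mathcomp Require Import all_boot all_order all_algebra.
From mathcomp Require Import reals.
From mathcomp Require Import zify ring lra.
Import Order.TTheory GRing.Theory Num.Theory.
Local Open Scope ring_scope.

(* Since A_i - Ahat_i = phat - p, both events depend on the outcome only through the
   number of successes R, which is Binomial(G, p): exactly 'C(G, k) outcomes have
   R = k, each of weight p^k (1-p)^(G-k).  Conditioning on S divides by
   P(S) = 1 - (1-p)^G - p^G.  The event phat - p > eps reads R > floor(G (p + eps)),
   which already forces R >= 1, so only R = G has to be excluded; symmetrically
   p - phat > eps reads R < ceil(G (p - eps)) <= G, and only R = 0 is excluded. *)

Section BinomialLaw.
Variables (R : realType) (G : nat) (p : R).

Definition binomial_mass (k : nat) : R :=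
  ('C(G, k))%:R * p ^+ k * (1 - p) ^+ (G - k).

Definition outcome_of_set (A : {set 'I_G}) : outcome G := [ffun j => j \in A].

Lemma outcome_of_setK : cancel outcome_of_set (fun w => [set j | w j]).
Proof. by move=> A; apply/setP => j; rewrite inE ffunE. Qed.

Lemma Rsum_card (w : outcome G) : Rsum w = #|[set j | w j]|.
Proof.
rewrite /Rsum -sum1_card [in RHS]big_mkcond /=.
by apply: eq_bigr => j _; rewrite inE; case: (w j).
Qed.

Lemma Rsum_le (w : outcome G) : (Rsum w <= G)%N.
Proof. by rewrite Rsum_card -[X in (_ <= X)%N]card_ord max_card. Qed.

Lemma weight_Rsum (w : outcome G) :
  weight p w = p ^+ Rsum w * (1 - p) ^+ (G - Rsum w).
Proof.
rewrite /weight (bigID (fun j => w j)) /=.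
rewrite [X in X * _](eq_bigr (fun _ => p)) => [|j ->] //.
rewrite [X in _ * X](eq_bigr (fun _ => 1 - p)) => [|j /negPf ->] //.
have card_w : #|[pred j | w j]| = Rsum w.
  by rewrite Rsum_card; apply: eq_card => j; rewrite inE.
have card_notw : #|[pred j | ~~ w j]| = (G - Rsum w)%N.
  have := cardC [pred j | w j]; rewrite card_ord card_w.
  rewrite (eq_card (B := [pred j | ~~ w j])) //; lia.
by rewrite !GRing.prodr_const card_w card_notw.
Qed.

Lemma card_Rsum_eq (k : nat) :
  #|[pred w : outcome G | Rsum w == k]| = 'C(G, k).
Proof.
rewrite -[in RHS](card_ord G) -card_draws.
have inj : injective (fun w : outcome G => [set j | w j]).
  by move=> w1 w2 /setP e; apply/ffunP => j; have := e j; rewrite !inE.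
rewrite -(card_imset _ inj); apply: eq_card => A; rewrite inE.
apply/imsetP/idP => [[w /eqP <- ->]|/eqP cardA]; first by rewrite -Rsum_card.
exists (outcome_of_set A); last by rewrite outcome_of_setK.
by rewrite inE Rsum_card outcome_of_setK cardA.
Qed.

Lemma Pr_Rsum (E : pred (outcome G)) (P : pred nat) :
  (forall w, E w = P (Rsum w)) ->
  Pr p E = \sum_(k < G.+1 | P k) binomial_mass k.
Proof.
move=> defE; rewrite /Pr (eq_bigl _ _ defE).
rewrite (partition_big (fun w => inord (Rsum w) : 'I_G.+1) P) => /= [|w]; last first.
  by rewrite inordK // ltnS Rsum_le.
apply: eq_bigr => k Pk.
rewrite (eq_bigl (fun w => Rsum w == k)) => [|w]; last first.
  apply/andP/eqP => [[_ /eqP <-]|Ek]; first by rewrite inordK // ltnS Rsum_le.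
  by rewrite Ek Pk; split=> //; apply/eqP/val_inj; rewrite /= inordK.
rewrite (eq_bigr (fun _ => p ^+ k * (1 - p) ^+ (G - k))) => [|w /eqP <-]; last first.
  exact: weight_Rsum.
rewrite sumr_const (eq_card (B := [pred w | Rsum w == k])) // card_Rsum_eq.
by rewrite -mulr_natl mulrA.
Qed.

Lemma nondegE (w : outcome G) : (0 < G)%N -> nondeg w = (0 < Rsum w < G)%N.
Proof. by move=> G_gt0; rewrite /nondeg inE; congr (_ && _); lia. Qed.

Lemma sum_binomial_mass : \sum_(k < G.+1) binomial_mass k = 1.
Proof.
rewrite -(expr1n R G) -{1}(subrK p 1) exprDn.
by apply: eq_bigr => k _; rewrite /binomial_mass -mulr_natl; ring.
Qed.

Lemma Pr_nondeg : (0 < G)%N -> Pr p (@nondeg G) = 1 - (1 - p) ^+ G - p ^+ G.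
Proof.
move=> G_gt0.
rewrite (@Pr_Rsum _ (fun k => (0 < k < G)%N)) => [|w]; last exact: nondegE.
have := sum_binomial_mass.
rewrite (bigD1 ord0) //= (bigD1 ord_max) /=; last by rewrite -val_eqE /= -lt0n.
rewrite (eq_bigl (fun k : 'I_G.+1 => (0 < k < G)%N)) => [|k]; last first.
  rewrite -!val_eqE /=; have := ltn_ord k; lia.
rewrite /binomial_mass subn0 subnn bin0 binn expr0 !mulr1 !mul1r; lra.
Qed.

Lemma condPr_nondeg_Rsum (E : pred (outcome G)) (P : pred nat) :
  (0 < G)%N -> (forall w, E w = P (Rsum w)) ->
  condPr p E (@nondeg G) =
  (\sum_(k < G.+1 | P k && (0 < k < G)%N) binomial_mass k)
  / (1 - (1 - p) ^+ G - p ^+ G).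
Proof.
move=> G_gt0 defE; rewrite /condPr Pr_nondeg //; congr (_ / _).
by apply: (@Pr_Rsum _ (fun k => P k && (0 < k < G)%N)) => w; rewrite /= defE nondegE.
Qed.

End BinomialLaw.

Lemma ltr_pdivlMn_floor (R : realType) (x : R) (k n : nat) :
  (0 < n)%N -> (x < k%:R / n%:R) = (Num.floor (n%:R * x) < k%:Z).
Proof. by move=> n_gt0; rewrite floor_lt_int ltr_pdivlMr ?ltr0n // mulrC. Qed.

Lemma ltr_pdivrMn_ceil (R : realType) (x : R) (k n : nat) :
  (0 < n)%N -> (k%:R / n%:R < x) = (k%:Z < Num.ceil (n%:R * x)).
Proof. by move=> n_gt0; rewrite ceil_gt_int ltr_pdivrMr ?ltr0n // mulrC. Qed.

Section Advantages.
Variables (R : realType) (G : nat) (p : R) (i : 'I_G).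

Lemma Aexp_sub_Ahat (w : outcome G) : Aexp p i w - Ahat R i w = phat R w - p.
Proof. by rewrite /Aexp /Ahat; ring. Qed.

Lemma Ahat_sub_Aexp (w : outcome G) : Ahat R i w - Aexp p i w = p - phat R w.
Proof. by rewrite /Aexp /Ahat; ring. Qed.

End Advantages.

Theorem theorem2 (R : realType) (G : nat) (p : R) (i : 'I_G) :
  (2 <= G)%N -> 0 < p -> p < 1 ->
  (p < 1 / 2 ->
   forall eps : R, 0 < eps -> eps < condE p (@phat R G) (@nondeg G) - p ->
   condPr p [pred w | Aexp p i w - Ahat R i w > eps] (@nondeg G) =
   (\sum_(k < G | Num.floor (G%:R * (p + eps)) < k%:Z)
       ('C(G, k))%:R * p ^+ k * (1 - p) ^+ (G - k))
   / (1 - (1 - p) ^+ G - p ^+ G)) /\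
  (1 / 2 < p ->
   forall eps : R, 0 < eps -> eps < p - condE p (@phat R G) (@nondeg G) ->
   condPr p [pred w | Ahat R i w - Aexp p i w > eps] (@nondeg G) =
   (\sum_(k < G.+1 | (1 <= k)%N && (k%:Z < Num.ceil (G%:R * (p - eps))))
       ('C(G, k))%:R * p ^+ k * (1 - p) ^+ (G - k))
   / (1 - (1 - p) ^+ G - p ^+ G)).
Proof.
move=> G_ge2 p_gt0 p_lt1; have G_gt0 : (0 < G)%N by lia.
(* Both formulas hold for every eps > 0: the bounds on p and eps only make them non-trivial. *)
split=> _ eps eps_gt0 _.
- rewrite (@condPr_nondeg_Rsum _ _ _ _ (fun k => eps < k%:R / G%:R - p)) //; last first.
    by move=> w; rewrite /= Aexp_sub_Ahat.
  congr (_ / _); rewrite [RHS](big_ord_widen_cond G.+1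
    (fun k => Num.floor (G%:R * (p + eps)) < k%:Z) (binomial_mass R G p)) //.
  apply: eq_bigl => k; rewrite ltrBrDr addrC ltr_pdivlMn_floor //.
  have floor_ge0 : 0 <= Num.floor (G%:R * (p + eps)).
    by rewrite floor_ge0 mulr_ge0 // addr_ge0 // ltW.
  case: ltP => [floor_lt|_] //=.
  by rewrite -ltz_nat (le_lt_trans floor_ge0 floor_lt).
- rewrite (@condPr_nondeg_Rsum _ _ _ _ (fun k => eps < p - k%:R / G%:R)) //; last first.
    by move=> w; rewrite /= Ahat_sub_Aexp.
  congr (_ / _); apply: eq_bigl => k; rewrite ltrBrDl -ltrBrDr ltr_pdivrMn_ceil //.
  have ceil_le : Num.ceil (G%:R * (p - eps)) <= G%:Z.
    rewrite ceil_le_int -[X in _ <= X]mulr1 ler_wpM2l ?ler0n //; lra.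
  case: ltP => [ceil_gt|_]; rewrite ?andbF ?andbT //.
  have k_lt : (k < G)%N by rewrite -ltz_nat (lt_le_trans ceil_gt ceil_le).
  by rewrite k_lt andbT.
Qed.
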